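(* Let $\mathcal K$ be the set of all continuous functions $k:\mathbb R\to[0,\infty)$ with $\int_{\mathbb R}k(x)\,dx=1$ such that there is a constant $\lambda>0$ with $\int_{\mathbb R}k(x)e^{\lambda|x|}\,dx<+\infty$. For $k\in\mathcal K$ define \[ E(k)=\operatorname{sign}(J(k))\Big[1-\inf_{\lambda\in\mathbb R}\int_{\mathbb R}k(x)e^{\lambda x}\,dx\Big],\qquad J(k)=\int_{\mathbb R}k(x)\,x\,dx . \] Then: (i) $E(k)=-E(\check k)$ for every $k\in\mathcal K$, where $\check k(x)=k(-x)$ for $x\in\mathbb R$; (ii) if $k_1,k_2\in\mathcal K$ and $k_1$ is more skewed to the right than $k_2$, i.e. $k_1(x)\geqslant k_2(x)$ for all $x>0$ and $k_1(x)\leqslant k_2(x)$ for all $x<0$, then $E(k_1)\geqslant E(k_2)$.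
   Context: $\operatorname{sign}$ denotes the sign function with $\operatorname{sign}(0)=0$. The integral $\int_{\mathbb R}k(x)e^{\lambda x}dx$ may equal $+\infty$ for some $\lambda$; the infimum is taken in $[0,+\infty]$. *)

From HB Require Import structures.
From mathcomp Require Import all_boot all_order all_algebra.
From mathcomp Require Import all_classical all_reals all_analysis.
Set Implicit Arguments. Unset Strict Implicit. Unset Printing Implicit Defensive.
Import Order.TTheory GRing.Theory Num.Theory.
Import numFieldNormedType.Exports.
Local Open Scope classical_set_scope.
Local Open Scope ring_scope.

Section Defs.
Variable R : realType.

Definition intR (f : R -> R) : \bar R :=
  (\int[@lebesgue_measure R]_(x in [set: R]) (f x)%:E)%E.

Definition inK (k : R -> R) : Prop :=
  [/\ continuous k,
      (forall x, 0 <= k x),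
      intR k = 1%:E
    & exists2 lam : R, 0 < lam &
        (intR (fun x => (k x * expR (lam * `|x|))%R) < +oo)%E].

(* J(k) = \int k(x) x dx  (finite for k in K) *)
Definition J (k : R -> R) : R := fine (intR (fun x => k x * x)).

Definition mgf_inf (k : R -> R) : \bar R :=
  ereal_inf [set intR (fun x => k x * expR (lam * x)) | lam in [set: R]].

(* E(k) = sign(J(k)) [1 - inf ...]   (Num.sg 0 = 0) *)
Definition E (k : R -> R) : \bar R :=
  ((Num.sg (J k))%:E * (1%:E - mgf_inf k))%E.

Definition check (k : R -> R) : R -> R := fun x => k (- x).

End Defs.

From HB Require Import structures.
From mathcomp Require Import all_boot all_order all_algebra.
From mathcomp Require Import all_classical all_reals all_analysis.
From mathcomp Require Import measurable_realfun lra.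
Import Order.TTheory GRing.Theory Num.Theory.
Import numFieldNormedType.Exports.
Set Implicit Arguments. Unset Strict Implicit. Unset Printing Implicit Defensive.
Local Open Scope classical_set_scope.
Local Open Scope ring_scope.

(** Write [M_k(lam)] for [\int k(x) e^(lam x) dx], so that [E k = sg (J k) (1 - inf M_k)].
    Reflection [x |-> -x] preserves Lebesgue measure, so it negates [J], turns [M_k(lam)]
    into [M_k(-lam)] and leaves [inf M_k] unchanged; hence (i).
    For (ii), moving mass of [k] to the right increases [J] and decreases [M_k(lam)] for
    [lam <= 0].  If [J k2 > 0], then [J k1 > 0] and for [lam > 0] the tangent bound
    [M_k2(lam) >= 1 + lam J k2 >= 1 = M_k1(0)] shows that [inf M_k1 <= inf M_k2].
    The case [J k1 < 0] is the mirror image of this one by (i), and otherwise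
    [E k2 <= 0 <= E k1]. *)

Section reflection.
Variable R : realType.
Local Notation mu := (@lebesgue_measure R).

Lemma ge0_integral_reflN (g : R -> \bar R) : measurable_fun setT g ->
  (forall x, 0 <= g x)%E ->
  (\int[mu]_(x in [set: R]) g (- x)%R = \int[mu]_(x in [set: R]) g x)%E.
Proof.
move=> mg g0.
have -> : (\int[mu]_(x in [set: R]) g (- x)%R =
    \int[mu]_(x in (-%R : R -> measurableTypeR R) @^-1` [set: R]) (g \o -%R) x)%E.
  by rewrite preimage_setT.
rewrite -ge0_integral_pushforward //.
by apply: eq_measure_integral => A mA _; exact: lebesgue_measureN.
Qed.

Lemma intR_reflN (f : R -> R) : measurable_fun setT f ->
  intR (fun x => f (- x)) = intR f.
Proof.
move=> mf; rewrite /intR integralE [RHS]integralE.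
have mfE : measurable_fun setT (fun x => (f x)%:E) by exact/measurable_EFinP.
congr (_ - _)%E.
  rewrite -(ge0_integral_reflN (measurable_funepos mfE)); last exact: funepos_ge0.
  by apply: eq_integral => x _; rewrite !funeposE.
rewrite -(ge0_integral_reflN (measurable_funeneg mfE)); last exact: funeneg_ge0.
by apply: eq_integral => x _; rewrite !funenegE.
Qed.

End reflection.

Section integrals.
Variable R : realType.
Local Notation mu := (@lebesgue_measure R).

Definition mgf (k : R -> R) (lam : R) : \bar R :=
  intR (fun x => k x * expR (lam * x)).

Lemma measurable_fun_mulexpR (k : R -> R) (lam : R) : measurable_fun setT k ->
  measurable_fun setT (fun x => k x * expR (lam * x)).
Proof.
move=> mk; apply: measurable_funM => //.
by apply: measurableT_comp; [exact: measurable_expR | exact: measurable_funM].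
Qed.

Lemma ge0_intR_integrable (f : R -> R) : measurable_fun setT f ->
  (forall x, 0 <= f x) -> (intR f < +oo)%E ->
  mu.-integrable setT (fun x => (f x)%:E).
Proof.
move=> mf f0 fi; apply/integrableP; split; first exact/measurable_EFinP.
by under eq_integral do rewrite gee0_abs ?lee_fin//.
Qed.

Lemma mgf_reflN (k : R -> R) (lam : R) : measurable_fun setT k ->
  mgf (check k) lam = mgf k (- lam).
Proof.
move=> mk; rewrite /mgf -(intR_reflN (measurable_fun_mulexpR (- lam) mk)).
by congr intR; apply: funext => x; rewrite /check mulrNN.
Qed.

Lemma mgf_inf_reflN (k : R -> R) : measurable_fun setT k ->
  mgf_inf (check k) = mgf_inf k.
Proof.
move=> mk; rewrite /mgf_inf; congr ereal_inf.
apply/seteqP; split => _ [lam _ <-]; exists (- lam) => //.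
  by rewrite -/(mgf k (- lam)) -/(mgf (check k) lam) mgf_reflN.
by rewrite -/(mgf k lam) -/(mgf (check k) (- lam)) mgf_reflN ?opprK.
Qed.

(** Pointwise [f w + g <= g w + f]; then cancel the equal finite masses of [f] and [g]. *)
Lemma intRM_le (f g w : R -> R) :
  measurable_fun setT f -> measurable_fun setT g -> measurable_fun setT w ->
  (forall x, 0 <= f x) -> (forall x, 0 <= g x) -> (forall x, 0 <= w x) ->
  intR f = intR g -> intR f \is a fin_num ->
  (forall x, (f x - g x) * (w x - 1) <= 0) ->
  (intR (fun x => (f x * w x)%R) <= intR (fun x => (g x * w x)%R))%E.
Proof.
move=> mf mg mw f0 g0 w0 fg ffin cross.
have mfw : measurable_fun setT (fun x => f x * w x) by exact: measurable_funM.
have mgw : measurable_fun setT (fun x => g x * w x) by exact: measurable_funM.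
have : (intR (fun x => (f x * w x + g x)%R) <= intR (fun x => (g x * w x + f x)%R))%E.
  apply: ge0_le_integral => //.
  - by move=> x _; rewrite lee_fin addr_ge0 // mulr_ge0.
  - exact/measurable_EFinP/measurable_funD.
  - exact/measurable_EFinP/measurable_funD.
  - by move=> x _; rewrite lee_fin; have := cross x; lra.
rewrite /intR; under eq_integral do rewrite EFinD.
under [X in (_ <= X)%E]eq_integral do rewrite EFinD.
rewrite ge0_integralD //; [|by move=> x _; rewrite lee_fin mulr_ge0
  | exact/measurable_EFinP | by move=> x _; rewrite lee_fin | exact/measurable_EFinP].
rewrite ge0_integralD //; [|by move=> x _; rewrite lee_fin mulr_ge0
  | exact/measurable_EFinP | by move=> x _; rewrite lee_fin | exact/measurable_EFinP].
by rewrite -!/(intR _) fg leeD2rE // -fg.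
Qed.

End integrals.

Section class_K.
Variable R : realType.
Local Notation mu := (@lebesgue_measure R).
Variable k : R -> R.
Hypothesis kK : inK k.

Let mk : measurable_fun setT k.
Proof. by case: kK => ck _ _ _; exact: continuous_measurable_fun. Qed.

Let k_ge0 : forall x, 0 <= k x.
Proof. by case: kK. Qed.

Let intR_k : intR k = 1%:E.
Proof. by case: kK. Qed.

Let measurable_moment (lam : R) :
  measurable_fun setT (fun x => k x * expR (lam * `|x|)).
Proof.
apply: measurable_funM => //; apply: measurableT_comp; first exact: measurable_expR.
by apply: measurable_funM => //; exact: measurableT_comp.
Qed.

Lemma inK_integrable : mu.-integrable setT (fun x => (k x)%:E).
Proof. by apply: ge0_intR_integrable => //; rewrite intR_k ltry. Qed.

(** [lam |x| <= e^(lam |x|)], so the exponential moment dominates the first moment. *)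
Lemma inK_integrable_mulid : mu.-integrable setT (fun x => (k x * x)%:E).
Proof.
case: kK => _ _ _ [lam lam_gt0 moment_fin].
have int_moment : mu.-integrable setT (fun x => (k x * expR (lam * `|x|))%:E).
  by apply: ge0_intR_integrable => // x; rewrite mulr_ge0 // expR_ge0.
apply: (le_integrable measurableT _ _ (integrableZl measurableT lam^-1 int_moment)).
  exact/measurable_EFinP/measurable_funM.
move=> x _; rewrite !abse_EFin lee_fin [leRHS]ger0_norm; last first.
  by rewrite mulr_ge0 ?mulr_ge0 ?expR_ge0 // invr_ge0 ltW.
rewrite normrM ger0_norm // mulrCA ler_wpM2l // ler_pdivlMl //.
by apply: le_trans (expR_ge1Dx _); lra.
Qed.

Lemma intR_mulid : intR (fun x => k x * x) = (J k)%:E.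
Proof. by rewrite /J fineK //; exact: integrable_fin_num inK_integrable_mulid. Qed.

Lemma mgf0 : mgf k 0 = 1%:E.
Proof. by rewrite -intR_k /mgf; congr intR; apply: funext => x; rewrite mul0r expR0 mulr1. Qed.

Lemma mgf_inf_le1 : (mgf_inf k <= 1)%E.
Proof. by rewrite -mgf0; apply: ereal_inf_lbound; exists 0. Qed.

(** Integrate [1 + y <= e^y] against [k]. *)
Lemma mgf_ge1DJ (lam : R) : ((1 + lam * J k)%:E <= mgf k lam)%E.
Proof.
have [mgf_fin|] := ltP (mgf k lam) +oo%E; last first.
  by rewrite leye_eq => /eqP ->; rewrite leey.
have int_mgf := ge0_intR_integrable (measurable_fun_mulexpR lam mk)
  (fun x => mulr_ge0 (k_ge0 x) (expR_ge0 _)) mgf_fin.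
have int_lin : mu.-integrable setT (fun x => (k x + lam * (k x * x))%:E).
  under eq_fun do rewrite EFinD EFinM.
  exact: (integrableD measurableT inK_integrable
    (integrableZl measurableT lam inK_integrable_mulid)).
have -> : (1 + lam * J k)%:E = intR (fun x => k x + lam * (k x * x)).
  rewrite /intR; under eq_integral do rewrite EFinD EFinM.
  rewrite integralD //; first last.
  - exact: (integrableZl measurableT lam inK_integrable_mulid).
  - exact: inK_integrable.
  rewrite integralZl //; last exact: inK_integrable_mulid.
  by rewrite -/(intR k) -/(intR (fun x => k x * x)) intR_k intR_mulid.
apply: le_integral => // x _.
rewrite lee_fin -[X in X + _]mulr1 mulrCA -mulrDr ler_wpM2l //.
exact: expR_ge1Dx.
Qed.

Lemma J_reflN : J (check k) = - J k.
Proof.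
have mkx : measurable_fun setT (fun x => - (k x * x)) by exact/measurableT_comp/measurable_funM.
rewrite /J.
have -> : intR (fun x => check k x * x) = intR (fun x => - (k (- x) * - x)).
  by congr intR; apply: funext => x; rewrite /check mulrN opprK.
rewrite (intR_reflN mkx) /intR.
under eq_integral do rewrite -mulN1r EFinM.
rewrite integralZl //; last exact: inK_integrable_mulid.
by rewrite -/(intR (fun x => k x * x)) intR_mulid mulN1e.
Qed.

Lemma inK_reflN : inK (check k).
Proof.
case: kK => ck _ _ [lam lam_gt0 moment_fin]; split.
- by move=> x; apply: continuous_comp; [exact: oppr_continuous | exact: ck].
- by move=> x; exact: k_ge0.
- by rewrite intR_reflN.
exists lam => //.
by rewrite -(intR_reflN (measurable_moment lam)) in moment_fin; under eq_fun do rewrite -normrN.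
Qed.

Lemma E_reflN : E (check k) = (- E k)%E.
Proof. by rewrite /E J_reflN mgf_inf_reflN // sgrN EFinN mulNe. Qed.

Lemma E_ge0 : 0 <= J k -> (0 <= E k)%E.
Proof.
move=> J_ge0; apply: mule_ge0; first by rewrite lee_fin sgr_ge0.
by rewrite sube_ge0 ?mgf_inf_le1 // orbT.
Qed.

Lemma E_le0 : J k <= 0 -> (E k <= 0)%E.
Proof.
move=> J_le0; apply: mule_le0_ge0; first by rewrite lee_fin sgr_le0.
by rewrite sube_ge0 ?mgf_inf_le1 // orbT.
Qed.

End class_K.

Section skew.
Variable R : realType.
Variables k1 k2 : R -> R.
Hypotheses (k1K : inK k1) (k2K : inK k2).
Hypothesis skew_pos : forall x : R, 0 < x -> k2 x <= k1 x.
Hypothesis skew_neg : forall x : R, x < 0 -> k1 x <= k2 x.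

Let skew_cross (w : R -> R) :
  (forall x, 0 < x -> w x <= 1) -> (forall x, x < 0 -> 1 <= w x) -> w 0 = 1 ->
  forall x, (k1 x - k2 x) * (w x - 1) <= 0.
Proof.
move=> w_pos w_neg w0 x; case: (ltgtP x 0) => [x_lt0|x_gt0|->].
- by apply: mulr_le0_ge0; rewrite ?subr_le0 ?subr_ge0; auto.
- by apply: mulr_ge0_le0; rewrite ?subr_le0 ?subr_ge0; auto.
- by rewrite w0 subrr mulr0.
Qed.

Lemma J_le_skew : J k2 <= J k1.
Proof.
rewrite -lee_fin -!intR_mulid //.
apply: le_integral => //; try exact: inK_integrable_mulid.
move=> x _; rewrite lee_fin; case: (ltgtP x 0) => [x_lt0|x_gt0|->].
- by rewrite ler_nM2r // skew_neg.
- by rewrite ler_pM2r // skew_pos.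
- by rewrite !mulr0.
Qed.

Lemma mgf_le_skew (lam : R) : lam <= 0 -> (mgf k1 lam <= mgf k2 lam)%E.
Proof.
case: k1K k2K => [ck1 k1_ge0 intR_k1 _] [ck2 k2_ge0 intR_k2 _] lam_le0.
have [mk1 mk2] := (continuous_measurable_fun ck1, continuous_measurable_fun ck2).
apply: intRM_le => //.
- by apply: measurableT_comp; [exact: measurable_expR | exact: measurable_funM].
- by rewrite intR_k1 intR_k2.
- by rewrite intR_k1.
apply: skew_cross => [x x_gt0|x x_lt0|]; last by rewrite mulr0 expR0.
  by rewrite expR_le1 mulr_le0_ge0 // ltW.
by rewrite leNgt expR_lt1 -leNgt mulr_le0 // ltW.
Qed.

Lemma mgf_inf_le_skew : 0 <= J k2 -> (mgf_inf k1 <= mgf_inf k2)%E.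
Proof.
move=> J2_ge0; apply/ereal_infP => _ [lam _ <-]; rewrite -/(mgf _ _).
have [lam_le0|lam_gt0] := leP lam 0.
  apply: le_trans (mgf_le_skew lam_le0).
  by apply: ereal_inf_lbound; exists lam.
apply: le_trans (mgf_inf_le1 k1K) (le_trans _ (mgf_ge1DJ k2K lam)).
by rewrite lee_fin lerDl mulr_ge0 // ltW.
Qed.

Lemma E_le_skew_Jgt0 : 0 < J k2 -> (E k2 <= E k1)%E.
Proof.
move=> J2_gt0; have J1_gt0 := lt_le_trans J2_gt0 J_le_skew.
rewrite /E !gtr0_sg // !mul1e; apply: leeB => //.
exact/mgf_inf_le_skew/ltW.
Qed.

End skew.

Theorem proposition2p1 (R : realType) :
  (forall k : R -> R, inK k -> E k = (- E (check k))%E) /\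
  (forall k1 k2 : R -> R, inK k1 -> inK k2 ->
     (forall x : R, 0 < x -> k2 x <= k1 x) ->
     (forall x : R, x < 0 -> k1 x <= k2 x) ->
     (E k2 <= E k1)%E).
Proof.
split; first by move=> k kK; rewrite E_reflN // oppeK.
move=> k1 k2 k1K k2K skew_pos skew_neg.
have [J2_gt0|J2_le0] := ltP 0 (J k2); first exact: E_le_skew_Jgt0.
have [J1_ge0|J1_lt0] := leP 0 (J k1).
  exact: le_trans (E_le0 k2K J2_le0) (E_ge0 k1K J1_ge0).
rewrite -leeN2 -!E_reflN //.
apply: E_le_skew_Jgt0 (inK_reflN k2K) (inK_reflN k1K) _ _ _.
- by move=> x x_gt0; rewrite /check skew_neg // oppr_lt0.
- by move=> x x_lt0; rewrite /check skew_pos // oppr_gt0.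
- by rewrite J_reflN // oppr_gt0.
Qed.
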